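(* Let $k\geq 2$ and consider the HC model with countable set of spin values $\mathbb Z$ on the Cayley tree $\Gamma^k$, associated with the graph $G$ on $\mathbb Z$ in which every vertex is adjacent to $0$ and no two vertices of $\mathbb Z_0=\mathbb Z\setminus\{0\}$ are adjacent, with activities $\lambda_j>0$. Then: (1) If the series $\sum_{j\in\mathbb Z_0}\lambda_j$ converges, there exists a unique translation-invariant Gibbs measure. (2) If the series $\sum_{j\in\mathbb Z_0}\lambda_j$ diverges, there is no translation-invariant Gibbs measure.
   Context: The Cayley tree $\Gamma^k$ of order $k$ is the infinite tree in which every vertex has exactly $k+1$ neighbours; $V$ is its vertex set. Fix a root $x^0$; for a vertex $x$, $S(x)$ denotes the set of its direct successors (the neighbours of $x$ farther from $x^0$). A configuration is a map $\sigma:V\to\mathbb Z$; it is admissible if $\sigma(x)\sigma(y)=0$ for all nearest neighbours $x,y$ (i.e. $\{\sigma(x),\sigma(y)\}$ is an edge of the graph $G$ above). The HC Hamiltonian is $H(\sigma)=J\sum_{x\in V}\ln\lambda_{\sigma(x)}$ for admissible $\sigma$ and $+\infty$ otherwise, with activities $\lambda_i>0$, $i\in\mathbb Z$. Gibbs measures (tree-indexed Markov chains) of this model are in one-to-one correspondence with normalisable boundary laws; after normalisation at the spin value $0$, boundary laws correspond to families $z_x=(z_{i,x})_{i\in\mathbb Z_0}$ of positive numbers, $x\in V$, satisfying $$z_{i,x}=\lambda_i\prod_{y\in S(x)}\frac{1}{1+\sum_{j\in\mathbb Z_0}z_{j,y}},\qquad i\in\mathbb Z_0 .$$ A translation-invariant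 Gibbs measure is one corresponding to a solution with $z_x=z$ independent of $x$, i.e. to a positive sequence $z=(z_i)_{i\in\mathbb Z_0}$ with $z_i=\lambda_i\bigl(1+\sum_{j\in\mathbb Z_0}z_j\bigr)^{-k}$ for all $i\in\mathbb Z_0$; such a solution is normalisable (hence defines a Gibbs measure) if $\sum_{i}z_i^{(k+1)/k}<\infty$. *)

From Stdlib Require Import Reals ZArith.
From Coquelicot Require Import Coquelicot.
Open Scope R_scope.

(* Sequences indexed by Z_0 = Z \ {0} are represented as functions Z -> R
   whose value at 0 is ignored. *)

Definition Z0_summable (a : Z -> R) : Prop :=
  ex_series (fun n : nat => a (Z.of_nat (S n))) /\
  ex_series (fun n : nat => a (- Z.of_nat (S n))%Z).

Definition Z0_sum (a : Z -> R) : R :=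
  Series (fun n : nat => a (Z.of_nat (S n))) +
  Series (fun n : nat => a (- Z.of_nat (S n))%Z).

(* Translation-invariant boundary law (normalised at 0): a positive sequence
   z = (z_i)_{i in Z_0} with z_i = lambda_i (1 + sum_{j in Z_0} z_j)^{-k}. *)
Definition TI_boundary_law (k : nat) (lam z : Z -> R) : Prop :=
  (forall i : Z, i <> 0%Z -> 0 < z i) /\
  Z0_summable z /\
  (forall i : Z, i <> 0%Z -> z i = lam i / (1 + Z0_sum z) ^ k).

Definition normalisable (k : nat) (z : Z -> R) : Prop :=
  Z0_summable (fun i => Rpower (z i) ((INR k + 1) / INR k)).

(* Translation-invariant Gibbs measures of the HC model are, via the
   one-to-one correspondence recalled in the context, the normalisable
   translation-invariant boundary laws. *)
Definition TI_Gibbs (k : nat) (lam z : Z -> R) : Prop :=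
  TI_boundary_law k lam z /\ normalisable k z.

(* Dividing the boundary-law equation by lambda_i shows that every
   translation-invariant boundary law is lambda / (1 + S)^k, where
   S = sum_{j in Z_0} z_j; summing it gives S (1 + S)^k = sum_j lambda_j.
   Since s |-> s (1 + s)^k is an increasing bijection of [0, +oo), this
   equation has exactly one solution when the activities are summable, and a
   boundary law would make them summable otherwise.  Normalisability is
   automatic: a summable sequence is eventually below 1, where
   z^((k+1)/k) <= z. *)

From Stdlib Require Import Reals ZArith Lra Lia.
From Coquelicot Require Import Coquelicot.
Open Scope R_scope.

Lemma Series_nonneg (a : nat -> R) :
  (forall n, 0 <= a n) -> ex_series a -> 0 <= Series a.
Proof.
  intros Ha Ea.
  replace 0 with (Series (fun n => 0 * a n)) by (rewrite Series_scal_l; ring).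
  apply Series_le; [|exact Ea].
  intro n; specialize (Ha n); lra.
Qed.

Lemma Rpower_le_self (x p : R) : 0 < x <= 1 -> 1 <= p -> Rpower x p <= x.
Proof.
  intros Hx Hp.
  replace p with (1 + (p - 1)) by ring.
  rewrite Rpower_plus, Rpower_1 by lra.
  assert (Hle1 : Rpower x (p - 1) <= Rpower 1 (p - 1))
    by (apply Rle_Rpower_l; lra).
  assert (Hone : Rpower 1 (p - 1) = 1)
    by (unfold Rpower; rewrite ln_1, Rmult_0_r; apply exp_0).
  pose proof (exp_pos ((p - 1) * ln x)); fold (Rpower x (p - 1)) in *.
  nra.
Qed.

Lemma ex_series_Rpower (a : nat -> R) (p : R) :
  1 <= p -> (forall n, 0 < a n) -> ex_series a ->
  ex_series (fun n => Rpower (a n) p).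
Proof.
  intros Hp Hpos Ea.
  destruct (proj2 (is_lim_seq_spec a 0) (ex_series_lim_0 a Ea)
              (mkposreal 1 Rlt_0_1)) as [N HN].
  apply (proj2 (ex_series_incr_n _ N)).
  apply (@ex_series_le R_AbsRing R_CompleteNormedModule _ (fun n => a (N + n)%nat));
    [|exact (proj1 (ex_series_incr_n _ N) Ea)].
  intro n.
  assert (Hsmall : a (N + n)%nat <= 1).
  { specialize (HN (N + n)%nat ltac:(lia)); simpl in HN.
    apply Rabs_def2 in HN; lra. }
  specialize (Hpos (N + n)%nat).
  change norm with Rabs; simpl.
  rewrite Rabs_pos_eq by (apply Rlt_le, exp_pos).
  apply Rpower_le_self; lra.
Qed.

Lemma Z_of_succ_neq0 (n : nat) : Z.of_nat (S n) <> 0%Z.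
Proof. lia. Qed.

Lemma Zopp_of_succ_neq0 (n : nat) : (- Z.of_nat (S n))%Z <> 0%Z.
Proof. lia. Qed.

Lemma Z0_summable_ext (a b : Z -> R) :
  (forall i, i <> 0%Z -> a i = b i) -> Z0_summable a -> Z0_summable b.
Proof.
  intros Hab [Epos Eneg]; split.
  - apply (ex_series_ext _ _ (fun n => Hab _ (Z_of_succ_neq0 n)) Epos).
  - apply (ex_series_ext _ _ (fun n => Hab _ (Zopp_of_succ_neq0 n)) Eneg).
Qed.

Lemma Z0_sum_ext (a b : Z -> R) :
  (forall i, i <> 0%Z -> a i = b i) -> Z0_sum a = Z0_sum b.
Proof.
  intros Hab; unfold Z0_sum.
  now rewrite (Series_ext _ _ (fun n => Hab _ (Z_of_succ_neq0 n))),
    (Series_ext _ _ (fun n => Hab _ (Zopp_of_succ_neq0 n))).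
Qed.

Lemma Z0_summable_scal_r (c : R) (a : Z -> R) :
  Z0_summable a -> Z0_summable (fun i => a i * c).
Proof. intros [Epos Eneg]; split; now apply ex_series_scal_r. Qed.

Lemma Z0_sum_scal_r (c : R) (a : Z -> R) :
  Z0_sum (fun i => a i * c) = Z0_sum a * c.
Proof. unfold Z0_sum; rewrite !Series_scal_r; ring. Qed.

Lemma Z0_sum_nonneg (a : Z -> R) :
  (forall i, i <> 0%Z -> 0 <= a i) -> Z0_summable a -> 0 <= Z0_sum a.
Proof.
  intros Ha [Epos Eneg]; unfold Z0_sum.
  apply Rplus_le_le_0_compat; apply Series_nonneg; try assumption;
    intro n; apply Ha; [apply Z_of_succ_neq0 | apply Zopp_of_succ_neq0].
Qed.

Lemma Z0_summable_Rpower (a : Z -> R) (p : R) :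
  1 <= p -> (forall i, i <> 0%Z -> 0 < a i) -> Z0_summable a ->
  Z0_summable (fun i => Rpower (a i) p).
Proof.
  intros Hp Hpos [Epos Eneg]; split; apply ex_series_Rpower; try assumption;
    intro n; apply Hpos; [apply Z_of_succ_neq0 | apply Zopp_of_succ_neq0].
Qed.

Definition hc_poly (k : nat) (s : R) : R := s * (1 + s) ^ k.

Lemma hc_poly_lt (k : nat) (s t : R) :
  0 <= s -> s < t -> hc_poly k s < hc_poly k t.
Proof.
  intros Hs Hst; unfold hc_poly.
  assert ((1 + s) ^ k <= (1 + t) ^ k) by (apply pow_incr; lra).
  assert (0 < (1 + t) ^ k) by (apply pow_lt; lra).
  nra.
Qed.

Lemma hc_poly_inj (k : nat) (s t : R) :
  0 <= s -> 0 <= t -> hc_poly k s = hc_poly k t -> s = t.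
Proof.
  intros Hs Ht Heq.
  destruct (Rtotal_order s t) as [Hlt | [Hst | Hgt]]; [| exact Hst |].
  - apply (hc_poly_lt k) in Hlt; lra.
  - apply (hc_poly_lt k) in Hgt; lra.
Qed.

Lemma hc_poly_onto (k : nat) (L : R) :
  0 <= L -> exists s, 0 <= s /\ hc_poly k s = L.
Proof.
  intros HL.
  assert (Hcont : continuity (fun s => hc_poly k s - L))
    by (unfold hc_poly; reg).
  assert (Hge : L <= hc_poly k L).
  { unfold hc_poly.
    assert (1 <= (1 + L) ^ k) by (apply pow_R1_Rle; lra).
    nra. }
  destruct (IVT_cor _ 0 L Hcont HL) as [s [Hs Hroot]].
  - unfold hc_poly at 1; rewrite Rmult_0_l. nra.
  - exists s; split; lra.
Qed.

Section BoundaryLaws.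

Variables (k : nat) (lam : Z -> R).

Lemma TI_boundary_law_sum_ge0 (z : Z -> R) :
  TI_boundary_law k lam z -> 0 <= Z0_sum z.
Proof.
  intros (Hpos & Ez & _).
  exact (Z0_sum_nonneg z (fun j Hj => Rlt_le _ _ (Hpos j Hj)) Ez).
Qed.

Lemma TI_boundary_law_lam (z : Z -> R) :
  TI_boundary_law k lam z ->
  forall i, i <> 0%Z -> lam i = z i * (1 + Z0_sum z) ^ k.
Proof.
  intros Hlaw i Hi.
  assert (0 < (1 + Z0_sum z) ^ k).
  { apply pow_lt; pose proof (TI_boundary_law_sum_ge0 z Hlaw); lra. }
  destruct Hlaw as (_ & _ & Hz).
  rewrite (Hz i Hi); field; lra.
Qed.

Lemma TI_boundary_law_summable (z : Z -> R) :
  TI_boundary_law k lam z -> Z0_summable lam.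
Proof.
  intros Hlaw.
  apply (Z0_summable_ext (fun i => z i * (1 + Z0_sum z) ^ k)).
  - intros i Hi; symmetry; exact (TI_boundary_law_lam z Hlaw i Hi).
  - apply Z0_summable_scal_r, Hlaw.
Qed.

Lemma TI_boundary_law_hc_poly (z : Z -> R) :
  TI_boundary_law k lam z -> hc_poly k (Z0_sum z) = Z0_sum lam.
Proof.
  intros Hlaw.
  rewrite (Z0_sum_ext lam (fun i => z i * (1 + Z0_sum z) ^ k))
    by exact (TI_boundary_law_lam z Hlaw).
  now rewrite Z0_sum_scal_r.
Qed.

Lemma TI_boundary_law_unique (z z' : Z -> R) :
  TI_boundary_law k lam z -> TI_boundary_law k lam z' ->
  forall i, i <> 0%Z -> z' i = z i.
Proof.
  intros Hz Hz' i Hi.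
  assert (Hsum : Z0_sum z' = Z0_sum z).
  { apply (hc_poly_inj k); try (now apply TI_boundary_law_sum_ge0).
    now rewrite !TI_boundary_law_hc_poly. }
  destruct Hz as (_ & _ & Hz), Hz' as (_ & _ & Hz').
  now rewrite (Hz i Hi), (Hz' i Hi), Hsum.
Qed.

Lemma TI_boundary_law_exists :
  (forall j, 0 < lam j) -> Z0_summable lam ->
  exists z, TI_boundary_law k lam z.
Proof.
  intros Hlam Elam.
  destruct (hc_poly_onto k (Z0_sum lam)) as [s [Hs Hpoly]].
  { apply Z0_sum_nonneg; [intros j _; apply Rlt_le, Hlam | exact Elam]. }
  assert (Hc : 0 < (1 + s) ^ k) by (apply pow_lt; lra).
  assert (Hsum : Z0_sum (fun i => lam i * / (1 + s) ^ k) = s).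
  { rewrite Z0_sum_scal_r, <- Hpoly; unfold hc_poly; field; lra. }
  exists (fun i => lam i * / (1 + s) ^ k); split; [|split].
  - intros i _; apply Rmult_lt_0_compat; [apply Hlam | now apply Rinv_0_lt_compat].
  - now apply Z0_summable_scal_r.
  - intros i _; now rewrite Hsum.
Qed.

Lemma TI_boundary_law_normalisable (z : Z -> R) :
  (1 <= k)%nat -> TI_boundary_law k lam z -> normalisable k z.
Proof.
  intros Hk (Hpos & Ez & _).
  assert (Hkr : 1 <= INR k) by (apply (le_INR 1); exact Hk).
  apply Z0_summable_Rpower; [| exact Hpos | exact Ez].
  apply (Rmult_le_reg_r (INR k)); [lra|].
  field_simplify; lra.
Qed.

End BoundaryLaws.

Theorem mainTheorem1 :
  forall (k : nat), (2 <= k)%nat ->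
  forall (lam : Z -> R), (forall j : Z, 0 < lam j) ->
    (Z0_summable lam ->
       exists z : Z -> R, TI_Gibbs k lam z /\
         forall z' : Z -> R, TI_Gibbs k lam z' ->
           forall i : Z, i <> 0%Z -> z' i = z i) /\
    (~ Z0_summable lam -> ~ (exists z : Z -> R, TI_Gibbs k lam z)).
Proof.
  intros k Hk lam Hlam; split.
  - intros Elam.
    destruct (TI_boundary_law_exists k lam Hlam Elam) as [z Hz].
    exists z; split.
    + split; [exact Hz | apply (TI_boundary_law_normalisable k lam); [lia | exact Hz]].
    + intros z' [Hz' _].
      exact (TI_boundary_law_unique k lam z z' Hz Hz').
  - intros Hdiv [z [Hz _]].
    exact (Hdiv (TI_boundary_law_summable k lam z Hz)).
Qed.
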